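(* Let $\phi:\Omega^{even}(\mathbb{C}^n)^{\otimes 2}\to\Omega^{even}(\mathbb{C}^n)$ be the linear map $\phi(\omega_1\otimes\omega_2)=d\omega_1\wedge d\omega_2$. For any $i,j\in[1,n]$ and any $\omega_1,\omega_2\in\Omega^{even}(\mathbb{C}^n)$, the element $(x_{i1}-x_{i2})(x_{j1}-x_{j2})\,\omega_1\otimes\omega_2$ lies in the kernel of $\phi$. Consequently, for every $m\ge 2$, the submodule $(x_{i1}-x_{i2})(x_{j1}-x_{j2})\,\Omega^{mn}$ lies in the kernel of $\psi:\Omega^{mn}\to B_m(A_n)$.
   Context: $\Omega^{even}(\mathbb{C}^n)$ is the space of polynomial differential forms of even degree on $\mathbb{C}^n$ with coordinates $y_1,\dots,y_n$. For $m\ge 1$, $\Omega^{mn}:=\Omega^{even}(\mathbb{C}^n)^{\otimes m}$, which is a module over $\mathcal{O}_{mn}=\mathbb{C}[x_{ij}]_{1\le i\le n,1\le j\le m}$, where $x_{ij}$ acts by multiplication by the coordinate $y_i$ on the $j$-th tensor factor. $A_n$ is the free associative algebra on $n$ generators over $\mathbb{C}$, with lower central series $L_1=A_n$, $L_i=[A_n,L_{i-1}]$, $B_i(A_n)=L_i/L_{i+1}$; $\bar B_1(A_n)$ is the quotient of $B_1(A_n)=A_n/[A_n,A_n]$ by the image of $A_n[[A_n,A_n],A_n]A_n$, and the Lie bracket of $A_n$ induces brackets $\bar B_1\otimes \bar B_1\to B_2$, $B_i\otimes\bar B_1\to B_{i+1}$. By results of Feigin–Shoikhet there is a surjective linear map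 $\xi:\Omega^{even}(\mathbb{C}^n)\to\bar B_1(A_n)$ with kernel the exact even forms, and an isomorphism $\eta$ from the exact even forms of positive degree onto $B_2(A_n)$, such that $[\xi(\omega_1),\xi(\omega_2)]=\eta(d\omega_1\wedge d\omega_2)$. The map $\psi:\Omega^{mn}\to B_m(A_n)$ (for $m\ge2$) is defined by $\psi(\omega_1\otimes\cdots\otimes\omega_m)=[[\cdots[[b_1,b_2],b_3],\ldots],b_m]$ with $b_i=\xi(\omega_i)$. *)

From HB Require Import structures.
From mathcomp Require Import all_boot all_order all_algebra.
From mathcomp Require Import mpoly.
From mathcomp Require Import complex.
From mathcomp Require Import reals.
Set Implicit Arguments. Unset Strict Implicit. Unset Printing Implicit Defensive.
Import Order.TTheory GRing.Theory Num.Theory.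
Local Open Scope ring_scope.

(* Polynomial differential forms on C^n, coordinates y_1..y_n:
   a form is  sum_S f_S dy_S  (S a subset of 'I_n, dy_S the wedge of the dy_s
   in increasing order), represented by the finite function S |-> f_S. *)
Definition dform (R : realType) (n : nat) := {ffun {set 'I_n} -> {mpoly R[i][n]}}.

Section Forms.
Variables (R : realType) (n : nat).
Local Notation C := (R[i]).
Local Notation form := (dform R n).

Definition form_add (a b : form) : form := [ffun U => a U + b U].
Definition form_opp (a : form) : form := [ffun U => - a U].
Definition form_scale (c : C) (a : form) : form := [ffun U => c *: a U].
Definition form0 : form := [ffun _ => 0].

Definition mulY (i : 'I_n) (a : form) : form := [ffun U => 'X_i * a U].

(* sign of dy_S /\ dy_T = sgn S T dy_(S u T) for disjoint S, T *)
Definition wsgn (S T : {set 'I_n}) : C :=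
  (-1) ^+ #|[set p : 'I_n * 'I_n | (p.1 \in S) && (p.2 \in T) && (p.2 < p.1)%N]|.

Definition wedge (a b : form) : form :=
  [ffun U : {set 'I_n} => \sum_(S : {set 'I_n}) \sum_(T : {set 'I_n} |
        (S :&: T == set0) && (S :|: T == U)) wsgn S T *: (a S * b T)].

(* de Rham differential: d(f dy_S) = sum_i (df/dy_i) dy_i /\ dy_S *)
Definition dR (a : form) : form :=
  [ffun U : {set 'I_n} => \sum_(i : 'I_n | i \in U)
      (-1) ^+ #|[set k : 'I_n | (k \in U) && (k < i)%N]| *: mderiv i (a (U :\ i))].

Definition even_form (a : form) : Prop := forall U : {set 'I_n}, odd #|U| -> a U = 0.

(* exact even forms (these automatically have positive degree) *)
Definition exact_even (a : form) : Prop := even_form a /\ exists b, a = dR b.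

Definition phi (a b : form) : form := wedge (dR a) (dR b).

End Forms.

Section LCS.
Variables (K : fieldType) (A : algType K).

Definition comm (a b : A) : A := a * b - b * a.

Inductive inspan (P : A -> Prop) : A -> Prop :=
| span_gen x : P x -> inspan P x
| span_0 : inspan P 0
| span_add x y : inspan P x -> inspan P y -> inspan P (x + y)
| span_scale c x : inspan P x -> inspan P (c *: x).

(* L k : L_1 = A, L_(k+1) = span [A, L_k]  (L 0 is also A, by convention) *)
Fixpoint L (k : nat) : A -> Prop :=
  match k with
  | 0 | 1 => fun _ => True
  | k'.+1 => inspan (fun x => exists a l, L k' l /\ x = comm a l)
  end.
End LCS.

(* lift of psi(w1 (x) ... (x) wm) = [[...[[b1,b2],b3],...],bm] given the first
   bracket x = [b1,b2] and the remaining factors ws = [w3; ...; wm] *)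
Definition iterb (K : fieldType) (A : algType K) (T : Type) (xi : T -> A)
  (x : A) (ws : seq T) : A := foldl (fun acc w => comm acc (xi w)) x ws.

From HB Require Import structures.
From mathcomp Require Import all_boot all_order all_algebra.
From mathcomp Require Import mpoly complex reals.
From mathcomp Require Import ring zify.
Set Implicit Arguments. Unset Strict Implicit. Unset Printing Implicit Defensive.
Import Order.TTheory GRing.Theory Num.Theory.
Local Open Scope ring_scope.

(* By the Leibniz rule d(y_p w) = dy_p /\ w + y_p dw, the four terms of
   phi((x_p1 - x_p2)(x_q1 - x_q2) w1 (x) w2) expand bilinearly; every term
   containing dw1 /\ dw2, y_p dw1 or y_q dw2 cancels, and what remains is
   -(dy_p /\ w1) /\ (dy_q /\ w2) - (dy_q /\ w1) /\ (dy_p /\ w2), which vanishes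
   because exchanging p and q between the two factors flips the sign of every
   component.  For psi: a bracket [xi a, xi b] agrees with eta(phi(a (x) b))
   modulo L_3, eta is additive on exact forms and phi(a (x) b) = d(a /\ db) is
   exact, so the signed sum of the four brackets lies in L_3; bracketing with
   the remaining m - 2 factors pushes it into L_(m+1). *)

Lemma signr_eq_odd (R : pzRingType) (a b : nat) :
  odd a = odd b -> (-1) ^+ a = (-1) ^+ b :> R.
Proof. by move=> eab; rewrite -signr_odd eab signr_odd. Qed.

Lemma signr_opp_odd (R : pzRingType) (a b : nat) :
  odd a = ~~ odd b -> (-1) ^+ a = - (-1) ^+ b :> R.
Proof. by move=> eab; rewrite -signr_odd eab signrN signr_odd. Qed.

Section SubsetsAndInversions.
Variable n : nat.
Implicit Types (i j p q : 'I_n) (S T U V W X : {set 'I_n}).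

Lemma setU1D1 i S : ((i |: S) :\ i == S) = (i \notin S).
Proof. by apply/eqP/idP => [<-|/setU1K //]; rewrite !inE eqxx. Qed.

Lemma disjoint_setD S T : [disjoint S & T :\: S].
Proof. by rewrite -setI_eq0 setDE setICA setICr setI0. Qed.

Lemma setUD_subset S U : S \subset U -> S :|: (U :\: S) = U.
Proof. by move=> SU; rewrite setDE setUIr setUCr setIT; apply/setUidPr. Qed.

Lemma setD_setU1 U S i : i \in U -> i \notin S ->
  U :\: S = i |: (U :\: (i |: S)).
Proof.
by move=> iU iS; rewrite [i |: S]setUC -setDDl setD1K // inE iS.
Qed.

Lemma neq_ltn_add_gtn i j : i != j -> ((i < j) + (j < i) = 1)%N.
Proof. by rewrite -(inj_eq val_inj) /=; case: ltngtP. Qed.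

Definition nlt i X : nat := (\sum_(t in X) (t < i))%N.
Definition ngt i X : nat := (\sum_(t in X) (i < t))%N.
Definition ninv S T : nat := (\sum_(s in S) \sum_(t in T) (t < s))%N.

Lemma big_setU_disjoint (F : 'I_n -> nat) S T : [disjoint S & T] ->
  (\sum_(i in S :|: T) F i = \sum_(i in S) F i + \sum_(i in T) F i)%N.
Proof.
by move=> dST; rewrite -bigU //; apply: eq_bigl => i; rewrite !inE.
Qed.

Lemma card_nlt i X : #|[set k | (k \in X) && (k < i)%N]| = nlt i X.
Proof.
rewrite -sum1_card /nlt big_mkcond [RHS]big_mkcond /=; apply: eq_bigr => k _.
by rewrite inE; case: (k \in X); case: (k < i)%N.
Qed.

Lemma card_ninv S T :
  #|[set st : 'I_n * 'I_n | (st.1 \in S) && (st.2 \in T) && (st.2 < st.1)%N]|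
  = ninv S T.
Proof.
rewrite /ninv pair_big_dep -sum1_card big_mkcond [RHS]big_mkcond /=.
apply: eq_bigr => -[s t] _ /=; rewrite inE.
by case: ((s \in S) && (t \in T)); case: (t < s)%N.
Qed.

Lemma nltU i S T : [disjoint S & T] -> nlt i (S :|: T) = (nlt i S + nlt i T)%N.
Proof. exact: big_setU_disjoint. Qed.

Lemma nlt1 i j : nlt i [set j] = (j < i)%N.
Proof. by rewrite /nlt big_set1. Qed.

Lemma nltD1 i j U : i \in U -> nlt j U = (nlt j (U :\ i) + (i < j))%N.
Proof.
by move=> iU; rewrite -{1}(setD1K iU) nltU ?nlt1 1?addnC // disjoints1 !inE eqxx.
Qed.

Lemma nlt_ngt i X : i \notin X -> (nlt i X + ngt i X)%N = #|X|.
Proof.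
move=> iX; rewrite /nlt /ngt -big_split -sum1_card; apply: eq_bigr => t tX.
by apply: neq_ltn_add_gtn; apply: contraNneq iX => <-.
Qed.

Lemma ninvUl S T X : [disjoint S & T] ->
  ninv (S :|: T) X = (ninv S X + ninv T X)%N.
Proof. exact: big_setU_disjoint. Qed.

Lemma ninvUr S T X : [disjoint S & T] ->
  ninv X (S :|: T) = (ninv X S + ninv X T)%N.
Proof.
by move=> dST; rewrite /ninv -big_split; apply: eq_bigr => s _; rewrite big_setU_disjoint.
Qed.

Lemma ninv1l i X : ninv [set i] X = nlt i X.
Proof. by rewrite /ninv big_set1. Qed.

Lemma ninv1r i X : ninv X [set i] = ngt i X.
Proof. by apply: eq_bigr => s _; rewrite big_set1. Qed.

Lemma ninv_swap_odd p q V W : p != q ->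
  p \notin V -> q \notin V -> p \notin W -> q \notin W ->
  odd (ninv (p |: V) (q |: W) + nlt p (p |: V) + nlt q (q |: W))
  = ~~ odd (ninv (q |: V) (p |: W) + nlt q (q |: V) + nlt p (p |: W)).
Proof.
move=> pq pV qV pW qW.
rewrite !ninvUl ?ninvUr ?disjoints1 // !ninv1l !ninv1r !nltU ?disjoints1 //.
rewrite !nlt1 !ltnn.
have := nlt_ngt pV; have := nlt_ngt qV; have := neq_ltn_add_gtn pq; lia.
Qed.

Lemma big_subset_sep (M : nmodType) (G : {set 'I_n} -> M) U p q :
  p \in U -> q \in U -> p != q ->
  (forall S, ~~ ((p \in S) && (q \in U :\: S)) -> G S = 0) ->
  \sum_(S : {set 'I_n} | S \subset U) G S
  = \sum_(V : {set 'I_n} | V \subset U :\: [set p; q]) G (p |: V).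
Proof.
move=> pU qU pq G0.
rewrite (bigID (fun S : {set 'I_n} => (p \in S) && (q \in U :\: S))) /=.
rewrite [X in _ + X]big1 ?addr0; last by move=> S /andP[_]; exact: G0.
rewrite (reindex_onto (fun V => p |: V) (fun S => S :\ p)) /=; last first.
  by move=> S /andP[_ /andP[pS _]]; rewrite setD1K.
apply: eq_bigl => V; rewrite !inE eqxx qU /= subUset sub1set pU /= (eq_sym q) (negbTE pq).
rewrite setU1D1 -setDDl !subsetD1.
by case: (V \subset U); case: (p \in V); case: (q \in V).
Qed.

End SubsetsAndInversions.

Section Forms.
Variables (R : realType) (n : nat).
Local Notation C := R[i].
Local Notation P := {mpoly R[i][n]}.
Local Notation form := (dform R n).
Implicit Types (a b c : form) (i j p q : 'I_n) (S T U V W : {set 'I_n}).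

Lemma formDE a b U : (a + b) U = a U + b U. Proof. by rewrite ffunE. Qed.
Lemma formNE a U : (- a) U = - a U. Proof. by rewrite ffunE. Qed.

Lemma mulYE p a U : mulY p a U = 'X_p * a U.
Proof. by rewrite ffunE. Qed.

Lemma mulYD p a b : mulY p (a + b) = mulY p a + mulY p b.
Proof. by apply/ffunP => U; rewrite !ffunE mulrDr. Qed.

Lemma mulYC p q a : mulY p (mulY q a) = mulY q (mulY p a).
Proof. by apply/ffunP => U; rewrite !ffunE mulrCA. Qed.

Lemma wedgeE a b U : wedge a b U =
  \sum_(S : {set 'I_n} | S \subset U) (-1) ^+ ninv S (U :\: S) *: (a S * b (U :\: S)).
Proof.
rewrite ffunE (bigID (fun S : {set 'I_n} => S \subset U)) /= [X in _ + X]big1 ?addr0.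
  apply: eq_bigr => S SU; rewrite (big_pred1 (U :\: S)) /wsgn ?card_ninv // => T.
  apply/andP/eqP => [[/eqP STI /eqP <-]|->].
    by rewrite setDUl setDv set0U; apply/esym/setDidPl; rewrite -setI_eq0 setIC STI.
  by rewrite setDE setICA setICr setI0 eqxx setUIr setUCr setIT (setUidPr SU) /=.
move=> S SnU; rewrite big1 // => T /andP[_ /eqP STU].
by move: SnU; rewrite -STU subsetUl.
Qed.

Lemma dRE a U : dR a U = \sum_(i in U) (-1) ^+ nlt i U *: mderiv i (a (U :\ i)).
Proof. by rewrite ffunE; apply: eq_bigr => i _; rewrite card_nlt. Qed.

Lemma dRB a b : dR (a - b) = dR a - dR b.
Proof.
apply/ffunP => U; rewrite !ffunE -sumrB; apply: eq_bigr => i _.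
by rewrite !ffunE mderivB scalerBr.
Qed.

HB.instance Definition _ := GRing.isZmodMorphism.Build form form (@dR R n) dRB.

Lemma wedgeDl a b c : wedge (a + b) c = wedge a c + wedge b c.
Proof.
apply/ffunP => U; rewrite !ffunE -big_split; apply: eq_bigr => S _.
by rewrite -big_split; apply: eq_bigr => T _; rewrite ffunE mulrDl scalerDr.
Qed.

Lemma wedgeDr a b c : wedge a (b + c) = wedge a b + wedge a c.
Proof.
apply/ffunP => U; rewrite !ffunE -big_split; apply: eq_bigr => S _.
by rewrite -big_split; apply: eq_bigr => T _; rewrite ffunE mulrDr scalerDr.
Qed.

Lemma wedge0r a : wedge a 0 = 0.
Proof.
apply/ffunP => U; rewrite !ffunE big1 // => S _.
by rewrite big1 // => T _; rewrite ffunE mulr0 scaler0.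
Qed.

Lemma wedge_mulYl p a b : wedge (mulY p a) b = mulY p (wedge a b).
Proof.
apply/ffunP => U; rewrite !ffunE mulr_sumr; apply: eq_bigr => S _.
by rewrite mulr_sumr; apply: eq_bigr => T _; rewrite ffunE -mulrA scalerAr.
Qed.

Lemma wedge_mulYr p a b : wedge a (mulY p b) = mulY p (wedge a b).
Proof.
apply/ffunP => U; rewrite !ffunE mulr_sumr; apply: eq_bigr => S _.
by rewrite mulr_sumr; apply: eq_bigr => T _; rewrite ffunE mulrCA scalerAr.
Qed.

Lemma mderivXU i j : mderiv j ('X_i : P) = (i == j)%:R.
Proof.
rewrite mderivX mnm1E; case: eqP => [->|_]; last by rewrite scale0r.
have -> : (U_(j) - U_(j))%MM = 0%MM by apply/mnmP => k; rewrite mnmBE subnn mnm0E.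
by rewrite mpolyX0 scale1r.
Qed.

Lemma sum_delta (F : 'I_n -> P) p U :
  \sum_(i in U) F i * (p == i)%:R = if p \in U then F p else 0.
Proof.
case: ifP => pU; last first.
  by apply: big1 => i iU; case: eqP => [pi|_]; [rewrite pi iU in pU | rewrite mulr0].
rewrite (bigD1 p) //= eqxx mulr1 big1 ?addr0 // => i /andP[_ ip].
by rewrite eq_sym (negbTE ip) mulr0.
Qed.

(* dy_p /\ a: moving dy_p into its place in dy_U costs the sign (-1)^(nlt p U). *)
Definition dy_wedge p a : form :=
  [ffun U : {set 'I_n} => if p \in U then (-1) ^+ nlt p U *: a (U :\ p) else 0].

Lemma dy_wedgeE p a U : p \in U -> dy_wedge p a U = (-1) ^+ nlt p U *: a (U :\ p).
Proof. by move=> pU; rewrite ffunE pU. Qed.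

Lemma dR_mulY p a : dR (mulY p a) = dy_wedge p a + mulY p (dR a).
Proof.
apply/ffunP => U; rewrite dRE [RHS]ffunE mulYE dRE ffunE mulr_sumr.
under eq_bigr => i _ do rewrite mulYE mderivM mderivXU (mulrC (_ == _)%:R) scalerDr scalerAl.
rewrite big_split /= sum_delta; congr (_ + _).
by apply: eq_bigr => i _; rewrite scalerAr.
Qed.

Lemma dy_wedge_mulY p q a : dy_wedge p (mulY q a) = mulY q (dy_wedge p a).
Proof.
by apply/ffunP => U; rewrite !ffunE; case: ifP; rewrite ?mulr0 // scalerAr.
Qed.

Lemma wedge_dy_wedge0 p q a b U : ~~ [&& p \in U, q \in U & p != q] ->
  wedge (dy_wedge p a) (dy_wedge q b) U = 0.
Proof.
move=> npq; rewrite wedgeE big1 // => S SU; rewrite !ffunE.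
case: ifP => pS; last by rewrite mul0r scaler0.
case: ifP => [/setDP[qU qS]|]; last by rewrite mulr0 scaler0.
case/negP: npq; rewrite (subsetP SU _ pS) qU /=.
by apply: contraNneq qS => <-.
Qed.

Lemma wedge_dy_wedgeE p q a b U : p \in U -> q \in U -> p != q ->
  wedge (dy_wedge p a) (dy_wedge q b) U =
  \sum_(V : {set 'I_n} | V \subset U :\: [set p; q])
    (-1) ^+ (ninv (p |: V) (q |: (U :\: (q |: (p |: V)))) + nlt p (p |: V)
             + nlt q (q |: (U :\: (q |: (p |: V))))) *:
      (a V * b (U :\: (q |: (p |: V)))).
Proof.
move=> pU qU pq; rewrite wedgeE (big_subset_sep pU qU pq); last first.
  move=> S; rewrite negb_and => /orP[/negbTE pS | /negbTE qS].
    by rewrite ffunE pS mul0r scaler0.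
  by rewrite [dy_wedge q b _]ffunE qS mulr0 scaler0.
apply: eq_bigr => V; rewrite -setDDl !subsetD1 => /andP[/andP[_ pV] qV].
have qpV : q \notin p |: V by rewrite !inE negb_or eq_sym pq.
have qW : q \notin U :\: (q |: (p |: V)) by rewrite !inE eqxx.
rewrite (setD_setU1 qU qpV) !dy_wedgeE ?setU11 // !setU1K //.
by rewrite -scalerAl -scalerAr !scalerA -!exprD.
Qed.

Lemma wedge_dy_wedgeC p q a b :
  wedge (dy_wedge p a) (dy_wedge q b) = - wedge (dy_wedge q a) (dy_wedge p b).
Proof.
apply/ffunP => U; rewrite [RHS]formNE.
have [/and3P[pU qU pq]|npq] := boolP [&& p \in U, q \in U & p != q]; last first.
  rewrite [LHS]wedge_dy_wedge0 // [in RHS]wedge_dy_wedge0 ?oppr0 //.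
  by apply: contra npq => /and3P[-> -> qp]; rewrite eq_sym qp.
rewrite [LHS]wedge_dy_wedgeE // [in RHS]wedge_dy_wedgeE 1?eq_sym //.
rewrite [[set q; p]]setUC -sumrN; apply: eq_bigr => V.
rewrite -setDDl !subsetD1 => /andP[/andP[_ pV] qV].
rewrite [q |: (p |: V)]setUCA -scaleNr; congr (_ *: _); apply: signr_opp_odd.
by apply: ninv_swap_odd; rewrite // !inE eqxx ?orbT.
Qed.

Lemma phi_mulY_kernel p q a b :
  phi (mulY p (mulY q a)) b - phi (mulY p a) (mulY q b)
  - phi (mulY q a) (mulY p b) + phi a (mulY p (mulY q b)) = 0.
Proof.
have := wedge_dy_wedgeC p q a b.
rewrite /phi !dR_mulY !dy_wedge_mulY.
(* Forms are generalized before each rewrite: unifying a concrete form with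
   [_ + _] would unfold both down to polynomials. *)
move: (dy_wedge p a) (dy_wedge q a) (dR a) (dy_wedge p b) (dy_wedge q b) (dR b).
move=> ap aq da bp bq db anti.
rewrite !mulYD !wedgeDl !wedgeDr !wedge_mulYl !wedge_mulYr anti.
move: (wedge aq bp) (wedge ap db) (wedge aq db) (wedge da db) (wedge da bq) (wedge da bp).
move=> w2 w3 w4 w5 w6 w7.
rewrite [mulY q (mulY p _)]mulYC.
move: (mulY q w3) (mulY p w4) (mulY p (mulY q w5)) (mulY p w6) (mulY q w7).
move=> z3 z4 z5 z6 z7.
apply/ffunP => U; rewrite !(formDE, formNE) [RHS]ffunE.
ring.
Qed.

Definition sign_form a : form := [ffun S : {set 'I_n} => (-1) ^+ #|S| *: a S].

Lemma dR_wedge_left a c U :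
  \sum_(i in U) \sum_(S : {set 'I_n} | S \subset U :\ i)
     ((-1) ^+ nlt i U * (-1) ^+ ninv S ((U :\ i) :\: S)) *:
       (mderiv i (a S) * c ((U :\ i) :\: S))
  = wedge (dR a) c U.
Proof.
rewrite wedgeE.
under [RHS]eq_bigr => S _ do rewrite dRE mulr_suml scaler_sumr.
rewrite (exchange_big_dep (fun i => i \in U)) /=; last first.
  by move=> S i SU iS; rewrite (subsetP SU).
apply: eq_bigr => i iU.
rewrite [RHS](reindex_onto (fun S => i |: S) (fun S => S :\ i)) /=; last first.
  by move=> S /andP[_ iS]; rewrite setD1K.
apply: eq_big => [S|S].
  by rewrite subUset sub1set iU setU11 /= setU1D1 subsetD1 andbT.
move=> /subsetD1P[SU iS]; rewrite setU1K // setDDl -scalerAl scalerA -!exprD.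
congr ((-1) ^+ _ *: _).
have EU : U = (i |: S) :|: (U :\: (i |: S)).
  by rewrite setUD_subset // subUset sub1set iU.
rewrite {1}EU nltU ?disjoint_setD // nltU ?disjoints1 // ninvUl ?disjoints1 //.
rewrite ninv1l nlt1 ltnn; set C := U :\: (i |: S); lia.
Qed.

Lemma dR_wedge_right a c U :
  \sum_(i in U) \sum_(S : {set 'I_n} | S \subset U :\ i)
     ((-1) ^+ nlt i U * (-1) ^+ ninv S ((U :\ i) :\: S)) *:
       (a S * mderiv i (c ((U :\ i) :\: S)))
  = wedge (sign_form a) (dR c) U.
Proof.
rewrite wedgeE (exchange_big_dep (fun S : {set 'I_n} => S \subset U)) /=; last first.
  by move=> i S _; rewrite subsetD1 => /andP[].
apply: eq_bigr => S SU; rewrite dRE ffunE -scalerAl mulr_sumr !scaler_sumr.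
apply: eq_big => [i|i]; first by rewrite subsetD1 SU /= in_setD andbC.
move=> /andP[iU /subsetD1P[_ iS]].
have -> : (U :\: S) :\ i = (U :\ i) :\: S by rewrite !setDDl setUC.
rewrite -!scalerAr !scalerA -!exprD; congr (_ *: _); apply: signr_eq_odd.
set C := U :\: (i |: S).
have ESC : U :\: S = i |: C by exact: setD_setU1.
have dSC : [disjoint S & i |: C] by rewrite -ESC disjoint_setD.
have iC : i \notin C by rewrite !inE eqxx.
have := nlt_ngt iS.
rewrite setDDl -/C ESC -{1}(setUD_subset SU) ESC nltU // ninvUr ?disjoints1 //.
by rewrite nltU ?disjoints1 // ninv1r nlt1 ltnn; lia.
Qed.

Lemma dR_wedge a c : dR (wedge a c) = wedge (dR a) c + wedge (sign_form a) (dR c).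
Proof.
apply/ffunP => U; rewrite [RHS]formDE -dR_wedge_left -dR_wedge_right -big_split dRE.
apply: eq_bigr => i _; rewrite wedgeE (raddf_sum (mderiv i)) /= scaler_sumr -big_split.
by apply: eq_bigr => S _; rewrite mderivZ mderivM scalerA scalerDr.
Qed.

Lemma eqN_eq0 (x : P) : x = - x -> x = 0.
Proof.
move=> xN; have two0 : (2%:R : C) *: x = 0 by rewrite scaler_nat mulr2n {2}xN subrr.
by rewrite -[x]scale1r -(mulVf (_ : 2%:R != 0 :> C)) ?pnatr_eq0 // -scalerA two0 scaler0.
Qed.

Lemma dR_dR a : dR (dR a) = 0.
Proof.
(* The double sum is its own negative: exchanging i and j commutes the two
   derivatives and flips the sign. *)
apply/ffunP => U; rewrite dRE ffunE; apply: eqN_eq0.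
under eq_bigr => i _ do rewrite dRE (raddf_sum (mderiv i)) /= scaler_sumr.
under eq_bigr => i _ do under eq_bigr => j _ do rewrite mderivZ scalerA.
rewrite {1}(exchange_big_dep (fun j => j \in U)) /=; last first.
  by move=> i j _; rewrite in_setD1 => /andP[].
rewrite -sumrN; apply: eq_bigr => j jU; rewrite -sumrN.
apply: eq_big => [i|i]; first by rewrite !in_setD1 jU andbT andbC eq_sym.
move=> /andP[iU]; rewrite in_setD1 => /andP[ji _].
have -> : (U :\ j) :\ i = (U :\ i) :\ j by rewrite !setDDl setUC.
rewrite [X in _ = - (_ *: X)]mderiv_comm -scaleNr -!exprD; congr (_ *: _).
apply: signr_opp_odd; rewrite (nltD1 j iU) (nltD1 i jU).
have := neq_ltn_add_gtn ji.
set e1 := nlt i (U :\ j); set e2 := nlt j (U :\ i); lia.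
Qed.

Lemma dR_even a S : even_form a -> ~~ odd #|S| -> dR a S = 0.
Proof.
move=> ea eS; rewrite dRE big1 // => i iS; rewrite ea ?mderiv0 ?scaler0 //.
by move: eS; rewrite (cardsD1 i S) iS add1n /= negbK.
Qed.

Lemma phi_even a b : even_form a -> even_form b -> even_form (phi a b).
Proof.
move=> ea eb U oU; rewrite /phi wedgeE big1 // => S SU.
have : odd #|U| = odd #|S| (+) odd #|U :\: S|.
  by rewrite -(cardsID S U) (setIidPr SU) oddD.
rewrite oU; case oS: (odd #|S|) => /= oUS.
  by rewrite (dR_even eb) -?oUS ?mulr0 ?scaler0.
by rewrite (dR_even ea) ?oS // mul0r scaler0.
Qed.

Lemma phi_exact a b : even_form a -> even_form b -> exact_even (phi a b).
Proof.
move=> ea eb; split; first exact: phi_even.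
by exists (wedge a (dR b)); rewrite dR_wedge dR_dR wedge0r addr0.
Qed.

Lemma mulY_even p a : even_form a -> even_form (mulY p a).
Proof. by move=> ea U oU; rewrite mulYE ea ?mulr0. Qed.

Lemma exact_evenB a b : exact_even a -> exact_even b -> exact_even (a - b).
Proof.
move=> [ea [a' Ea]] [eb [b' Eb]]; split; last by exists (a' - b'); rewrite raddfB Ea Eb.
by move=> U oU; rewrite formDE formNE ea ?eb ?subrr.
Qed.

End Forms.

Section ExactAdditive.
Variables (R : realType) (n : nat) (Z : zmodType) (eta : dform R n -> Z).
Hypothesis etaD : forall a b, exact_even a -> exact_even b -> eta (a + b) = eta a + eta b.

Lemma eta_sub a b : exact_even a -> exact_even b -> eta (a - b) = eta a - eta b.
Proof.
by move=> ea eb; rewrite -{2}(subrK b a) (etaD (exact_evenB ea eb) eb) addrK.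
Qed.

Lemma eta_phi_mulY_kernel p q a b : even_form a -> even_form b ->
  eta (phi (mulY p (mulY q a)) b) - eta (phi (mulY p a) (mulY q b))
  - eta (phi (mulY q a) (mulY p b)) + eta (phi a (mulY p (mulY q b))) = 0.
Proof.
move=> ea eb; have ev := @mulY_even R n; have ex := @phi_exact R n.
move: (phi_mulY_kernel p q a b) (ex _ _ (ev p _ (ev q _ ea)) eb) (ex _ _ (ev p _ ea) (ev q _ eb))
  (ex _ _ (ev q _ ea) (ev p _ eb)) (ex _ _ ea (ev p _ (ev q _ eb))).
move: (phi _ b) (phi _ (mulY q b)) (phi _ (mulY p b)) (phi a _) => P1 P2 P3 P4 P0 x1 x2 x3 x4.
have sub4 (M : zmodType) (x y z w : M) : x - y - z + w = (x - y) - (z - w).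
  by rewrite opprB addrA addrAC.
rewrite sub4 -(eta_sub x1 x2) -(eta_sub x3 x4).
rewrite -(eta_sub (exact_evenB x1 x2) (exact_evenB x3 x4)) -sub4 P0.
by rewrite -(subrr P1) eta_sub ?subrr.
Qed.

End ExactAdditive.

Section Brackets.
Variables (K : fieldType) (A : algType K).
Implicit Types (x y z : A).

Lemma commDl x y z : comm (x + y) z = comm x z + comm y z.
Proof. by rewrite /comm mulrDl mulrDr opprD addrACA. Qed.

Lemma commNl x z : comm (- x) z = - comm x z.
Proof. by rewrite /comm mulNr mulrN opprB opprK addrC. Qed.

Lemma iterbD (T : Type) (xi : T -> A) ws x y :
  iterb xi (x + y) ws = iterb xi x ws + iterb xi y ws.
Proof. by elim: ws x y => [|w ws IH] x y //=; rewrite commDl IH. Qed.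

Lemma iterbN (T : Type) (xi : T -> A) ws x : iterb xi (- x) ws = - iterb xi x ws.
Proof. by elim: ws x => [|w ws IH] x //=; rewrite commNl IH. Qed.

Lemma L_add k x y : L k.+2 x -> L k.+2 y -> L k.+2 (x + y).
Proof. exact: span_add. Qed.

Lemma L_opp k x : L k.+2 x -> L k.+2 (- x).
Proof. by rewrite -scaleN1r; apply: span_scale. Qed.

Lemma L_comm k x y : L k.+1 x -> L k.+2 (comm x y).
Proof.
move=> Lx; rewrite -[comm x y]opprK -scaleN1r; apply: span_scale.
by apply: span_gen; exists y, x; rewrite /comm opprB.
Qed.

Lemma L_iterb (T : Type) (xi : T -> A) ws k x :
  L k.+1 x -> L (size ws + k.+1) (iterb xi x ws).
Proof.
elim: ws k x => [|w ws IH] k x Lx; first by rewrite add0n.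
by have := IH k.+1 _ (L_comm (xi w) Lx); rewrite addSnnS.
Qed.

Lemma L_signed_sum k x1 x2 x3 x4 e1 e2 e3 e4 :
  L k.+2 (x1 - e1) -> L k.+2 (x2 - e2) -> L k.+2 (x3 - e3) -> L k.+2 (x4 - e4) ->
  e1 - e2 - e3 + e4 = 0 -> L k.+2 (x1 - x2 - x3 + x4).
Proof.
move=> L1 L2 L3 L4 e0.
rewrite -(subrK e1 x1) -(subrK e2 x2) -(subrK e3 x3) -(subrK e4 x4).
move: (x1 - e1) (x2 - e2) (x3 - e3) (x4 - e4) L1 L2 L3 L4 => r1 r2 r3 r4 L1 L2 L3 L4.
rewrite !opprD (addrACA r1) (addrACA (r1 - r2)) (addrACA (r1 - r2 - r3)) e0 addr0.
by apply: L_add => //; apply: L_add; [apply: L_add => // | ]; apply: L_opp.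
Qed.

End Brackets.

Theorem lemma3p1 (R : realType) (n : nat) (p q : 'I_n) (w1 w2 : dform R n) :
  even_form w1 -> even_form w2 ->
  (* part 1: phi((x_p1 - x_p2)(x_q1 - x_q2) w1 (x) w2) = 0 *)
  form_add
    (form_add (phi (mulY p (mulY q w1)) w2)
              (form_opp (phi (mulY p w1) (mulY q w2))))
    (form_add (form_opp (phi (mulY q w1) (mulY p w2)))
              (phi w1 (mulY p (mulY q w2))))
  = form0 R n
  /\
  (* part 2: for every m = size ws + 2 >= 2, psi kills
     (x_p1 - x_p2)(x_q1 - x_q2) (w1 (x) w2 (x) w3 (x) ... (x) wm) *)
  (forall (A : algType R[i]) (xi eta : dform R n -> A),
     (forall a b, even_form a -> even_form b -> xi (form_add a b) = xi a + xi b) ->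
     (forall c a, even_form a -> xi (form_scale c a) = c *: xi a) ->
     (forall a b, exact_even a -> exact_even b ->
        eta (form_add a b) = eta a + eta b) ->
     (forall c a, exact_even a -> eta (form_scale c a) = c *: eta a) ->
     (forall a, exact_even a -> L 2 (eta a)) ->
     (forall a b, even_form a -> even_form b ->
        L 3 (comm (xi a) (xi b) - eta (phi a b))) ->
     forall ws : seq (dform R n), (forall w, w \in ws -> even_form w) ->
     L (size ws + 3)
       (iterb xi (comm (xi (mulY p (mulY q w1))) (xi w2)) ws
        - iterb xi (comm (xi (mulY p w1)) (xi (mulY q w2))) ws
        - iterb xi (comm (xi (mulY q w1)) (xi (mulY p w2))) ws
        + iterb xi (comm (xi w1) (xi (mulY p (mulY q w2)))) ws)).
Proof.
move=> e1 e2; split.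
  move: (phi_mulY_kernel p q w1 w2).
  move: (phi _ w2) (phi _ (mulY q w2)) (phi _ (mulY p w2)) (phi w1 _) => P1 P2 P3 P4.
  by rewrite -addrA.
move=> A xi eta _ _ etaD _ _ brE ws _.
rewrite -!iterbN -!iterbD; apply: L_iterb.
have ev := @mulY_even R n.
apply: L_signed_sum (brE _ _ (ev _ _ (ev _ _ e1)) e2) (brE _ _ (ev _ _ e1) (ev _ _ e2))
  (brE _ _ (ev _ _ e1) (ev _ _ e2)) (brE _ _ e1 (ev _ _ (ev _ _ e2))) _.
exact: (eta_phi_mulY_kernel etaD).
Qed.
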